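(* Let $X$ be a finite discrete space with at least two elements, $\Gamma$ a nonempty countable set, $\varphi:\Gamma\to\Gamma$ a map, and $d$ a compatible metric on $X^\Gamma$. For each $x=(x_\alpha)\in X^\Gamma$ choose $y^x=(y^x_\alpha)\in X^\Gamma$ such that $\{\alpha\in\Gamma:x_\alpha\neq y^x_\alpha\}$ is a finite set of non-quasi-periodic points of $\varphi$. Let $D\subseteq X^\Gamma$ and $u,v\in X^\Gamma$. Then: (1) $F^*_{uv}(t)=1$ for all $t>0$ iff $F^*_{y^uy^v}(t)=1$ for all $t>0$; (2) there is $t>0$ with $F_{xz}(t)=0$ for all distinct $x,z\in D$ iff there is $t>0$ with $F_{y^xy^z}(t)=0$ for all distinct $x,z\in D$; (3) there is $t>0$ with $F_{xz}(t)<1$ for all distinct $x,z\in D$ iff there is $t>0$ with $F_{y^xy^z}(t)<1$ for all distinct $x,z\in D$. In particular, for $i\in\{1,2\}$, $D$ is a distributional scrambled set of type $i$ iff $\{y^x:x\in D\}$ is a distributional scrambled set of type $i$.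
   Context: $X^\Gamma$ has the product topology; $\sigma_\varphi((x_\alpha)_{\alpha\in\Gamma})=(x_{\varphi(\alpha)})_{\alpha\in\Gamma}$. A point $\theta\in\Gamma$ is non-quasi-periodic if $\{\varphi^n(\theta):n\ge0\}$ is infinite. With $f=\sigma_\varphi$, $\xi(x,y,t,n)=\#\{i\in\{0,\dots,n-1\}:d(f^i(x),f^i(y))<t\}$, $F_{xy}(t)=\liminf_n\xi(x,y,t,n)/n$, $F^*_{xy}(t)=\limsup_n\xi(x,y,t,n)/n$. A pair $x,y$ is distributional scrambled of type 1 if there is $s>0$ with $F_{xy}(s)=0$ and $F^*_{xy}(s)=1$ for all $s>0$; of type 2 if there is $s>0$ with $F_{xy}(s)<1$ and $F^*_{xy}(s)=1$ for all $s>0$. A set with at least two elements is distributional scrambled of type $i$ if every pair of its distinct points is.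
   Formalization: In the final claim, $\{y^x:x\in D\}$ is replaced by the family indexed by D: D has at least two elements and $y^x$, $y^z$ form a distributional scrambled pair of type i for all distinct x,z in D. The statement above fails without it. *)

From HB Require Import structures.
From mathcomp Require Import all_boot all_order all_algebra.
From mathcomp Require Import all_classical all_reals.
From mathcomp Require Import topology normedtype sequences.
Set Implicit Arguments. Unset Strict Implicit. Unset Printing Implicit Defensive.
Import Order.TTheory GRing.Theory Num.Theory.
Local Open Scope ring_scope.
Local Open Scope classical_set_scope.

Definition shift (X Gamma : Type) (phi : Gamma -> Gamma) (x : Gamma -> X) : Gamma -> X :=
  fun a => x (phi a).

Definition non_quasi_periodic (Gamma : Type) (phi : Gamma -> Gamma) (theta : Gamma) :=
  infinite_set [set iter n phi theta | n in [set: nat]].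

Definition is_metric (R : realType) (T : Type) (d : T -> T -> R) :=
  [/\ forall x y, 0 <= d x y,
      forall x y, d x y = 0 <-> x = y,
      forall x y, d x y = d y x &
      forall x y z, d x z <= d x y + d y z].

(* Cylinder (basic open) neighbourhood of x in the product topology of X^Gamma,
   X discrete: all points agreeing with x on the finite set of coordinates s. *)
Definition cylinder (X Gamma : eqType) (s : seq Gamma) (x : Gamma -> X) :=
  [set y : Gamma -> X | forall a, a \in s -> y a = x a].

(* d is compatible with the product topology on X^Gamma (X discrete): d is a
   metric, and at every point the open d-balls and the cylinders form
   mutually cofinal neighbourhood bases (i.e. the two topologies coincide). *)
Definition compatible_metric (R : realType) (X Gamma : eqType)
    (d : (Gamma -> X) -> (Gamma -> X) -> R) :=
  is_metric d /\
  forall x : Gamma -> X,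
    (forall e : R, 0 < e -> exists s : seq Gamma,
        cylinder s x `<=` [set y | d x y < e]) /\
    (forall s : seq Gamma, exists2 e : R, 0 < e &
        [set y | d x y < e] `<=` cylinder s x).

Definition xi (R : realType) (X Gamma : Type) (phi : Gamma -> Gamma)
    (d : (Gamma -> X) -> (Gamma -> X) -> R) (x y : Gamma -> X) (t : R) (n : nat) : nat :=
  #|[set i : 'I_n | (d (iter i (shift phi) x) (iter i (shift phi) y) < t)%R]|.

Definition Flow (R : realType) (X Gamma : Type) (phi : Gamma -> Gamma)
    (d : (Gamma -> X) -> (Gamma -> X) -> R) (x y : Gamma -> X) (t : R) : R :=
  limn_inf (fun n => (xi phi d x y t n)%:R / n%:R).

Definition Fup (R : realType) (X Gamma : Type) (phi : Gamma -> Gamma)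
    (d : (Gamma -> X) -> (Gamma -> X) -> R) (x y : Gamma -> X) (t : R) : R :=
  limn_sup (fun n => (xi phi d x y t n)%:R / n%:R).

Definition DC1_pair (R : realType) (X Gamma : Type) (phi : Gamma -> Gamma)
    (d : (Gamma -> X) -> (Gamma -> X) -> R) (x y : Gamma -> X) :=
  (exists2 s : R, 0 < s & Flow phi d x y s = 0) /\
  (forall s : R, 0 < s -> Fup phi d x y s = 1).

Definition DC2_pair (R : realType) (X Gamma : Type) (phi : Gamma -> Gamma)
    (d : (Gamma -> X) -> (Gamma -> X) -> R) (x y : Gamma -> X) :=
  (exists2 s : R, 0 < s & Flow phi d x y s < 1) /\
  (forall s : R, 0 < s -> Fup phi d x y s = 1).

Definition scrambled_set (T : Type) (P : T -> T -> Prop) (S : set T) :=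
  (exists x y, [/\ S x, S y & x <> y]) /\
  (forall x y, S x -> S y -> x <> y -> P x y).

From Pilot Require Import Defs.
From mathcomp Require Import all_boot all_order all_algebra.
From mathcomp Require Import all_classical all_reals.
From mathcomp Require Import topology normedtype sequences.
From mathcomp.algebra_tactics Require Import ring.
Set Implicit Arguments. Unset Strict Implicit. Unset Printing Implicit Defensive.
Import Order.TTheory GRing.Theory Num.Theory.
Import numFieldNormedType.Exports.
Local Open Scope ring_scope.
Local Open Scope classical_set_scope.

(* Changing a point of X^Gamma on finitely many non-quasi-periodic coordinates
   gives an asymptotic point: the orbit of each coordinate eventually leaves the
   finite set of changed coordinates for good, and, X^Gamma being compact,
   agreement on a large enough finite set of coordinates forces d-closeness
   uniformly.  Along asymptotic pairs the counts xi at thresholds t/2 and t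
   differ by a bounded amount, so F and F^* at t/2 are dominated by their values
   at t for the other pair; all the properties in the statement survive this
   halving of the threshold. *)

Section LimnSupInf.
Variable R : realType.
Implicit Types u v w : R^o^nat.

Lemma bounded_fun_le u (M : R) : (forall n, `|u n| <= M) -> bounded_fun u.
Proof.
move=> uM; rewrite /bounded_near; near=> M' => n _ /=; apply: (le_trans (uM n)).
by near: M'; apply: nbhs_pinfty_ge; rewrite num_real.
Unshelve. all: by end_near. Qed.

Lemma bounded_is_cvg_sups u : bounded_fun u -> cvgn (sups u).
Proof.
move=> bu; apply: nonincreasing_is_cvgn; last exact: bounded_fun_has_lbound_sups.
exact/nonincreasing_sups/bounded_fun_has_ubound.
Qed.

Lemma bounded_is_cvg_infs u : bounded_fun u -> cvgn (infs u).
Proof.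
move=> bu; apply: nondecreasing_is_cvgn; last exact: bounded_fun_has_ubound_infs.
exact/nondecreasing_infs/bounded_fun_has_lbound.
Qed.

Lemma le_limn_sup u v : bounded_fun u -> bounded_fun v ->
  (forall n, u n <= v n) -> limn_sup u <= limn_sup v.
Proof.
move=> bu bv uv; apply: ler_lim; [exact: bounded_is_cvg_sups..|].
apply: nearW => k; apply: ge_sup; first by exists (u k); exists k => /=.
move=> _ [n /= kn <-]; apply: le_trans (uv n) _; apply: ub_le_sup; last by exists n.
exact/has_ubound_sdrop/bounded_fun_has_ubound.
Qed.

Lemma le_limn_inf u v : bounded_fun u -> bounded_fun v ->
  (forall n, u n <= v n) -> limn_inf u <= limn_inf v.
Proof.
move=> bu bv uv; apply: ler_lim; [exact: bounded_is_cvg_infs..|].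
apply: nearW => k; apply: lb_le_inf; first by exists (v k); exists k => /=.
move=> _ [n /= kn <-]; apply: le_trans (uv n); apply: ge_inf; last by exists n.
exact/has_lbound_sdrop/bounded_fun_has_lbound.
Qed.

Lemma le_limn_sup_vanishing u v w : bounded_fun u -> bounded_fun v ->
  w @ \oo --> 0 -> (forall n, u n <= v n + w n) -> limn_sup u <= limn_sup v.
Proof.
move=> bu bv w0 uvw; have bw := cvg_seq_bounded (cvgP _ w0).
apply: (le_trans (le_limn_sup bu (bounded_funD bv bw) uvw)).
by rewrite (le_trans (le_limn_supD bv bw)) // (cvg_limn_inf_sup w0).2 addr0.
Qed.

Lemma le_limn_inf_vanishing u v w : bounded_fun u -> bounded_fun v ->
  w @ \oo --> 0 -> (forall n, u n <= v n + w n) -> limn_inf u <= limn_inf v.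
Proof.
move=> bu bv w0 uvw; have bNw := bounded_funN (cvg_seq_bounded (cvgP _ w0)).
have -> : limn_inf u = limn_inf u + limn_inf (- w).
  by rewrite (cvg_limn_inf_sup (cvgN w0)).1 oppr0 addr0.
apply: (le_trans (le_limn_infD bu bNw)).
apply: le_limn_inf (bounded_funD _ _) _ _ => //.
by move=> n; rewrite !fctE lerBlDr.
Qed.

End LimnSupInf.

Section Frequency.
Variable R : realType.
Implicit Types a b : nat -> nat.

Definition frequency a : R^o^nat := fun n => (a n)%:R / n%:R.

Lemma frequency_ge0 a n : 0 <= frequency a n.
Proof. by rewrite divr_ge0. Qed.

Lemma frequency_le1 a n : (a n <= n)%N -> frequency a n <= 1.
Proof.
case: n => [|n] an; first by rewrite /frequency invr0 mulr0.
by rewrite ler_pdivrMr ?ltr0n // mul1r ler_nat.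
Qed.

Lemma frequency_bounded a : (forall n, a n <= n)%N -> bounded_fun (frequency a).
Proof.
move=> an; apply: (@bounded_fun_le _ _ 1) => n.
by rewrite ger0_norm ?frequency_ge0 ?frequency_le1.
Qed.

Lemma frequency_cst_cvg0 N : frequency (fun=> N) @ \oo --> 0.
Proof.
have : (fun n : nat => (n%:R : R)^-1) @ \oo --> 0.
  apply/gtr0_cvgV0; last exact: cvgr_idn.
  by near=> n; rewrite ltr0n; near: n; exists 1%N.
by move/(@cvgMl_tmp _ _ _ _ _ N%:R); rewrite mulr0.
Unshelve. all: by end_near. Qed.

Lemma frequencyD a b n :
  frequency (fun n => a n + b n)%N n = frequency a n + frequency b n.
Proof. by rewrite /frequency natrD mulrDl. Qed.

Lemma le_frequency a b n : (a n <= b n)%N -> frequency a n <= frequency b n.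
Proof. by move=> ab; rewrite ler_wpM2r ?invr_ge0 ?ler_nat. Qed.

Section Comparison.
Variables (a b : nat -> nat) (N : nat).
Hypotheses (an : forall n, (a n <= n)%N) (bn : forall n, (b n <= n)%N).
Hypothesis abN : forall n, (a n <= b n + N)%N.

Let frequency_leD n : frequency a n <= frequency b n + frequency (fun=> N) n.
Proof. by rewrite -frequencyD le_frequency. Qed.

Lemma le_limn_sup_frequency : limn_sup (frequency a) <= limn_sup (frequency b).
Proof.
apply: le_limn_sup_vanishing (frequency_cst_cvg0 N) frequency_leD;
  exact: frequency_bounded.
Qed.

Lemma le_limn_inf_frequency : limn_inf (frequency a) <= limn_inf (frequency b).
Proof.
apply: le_limn_inf_vanishing (frequency_cst_cvg0 N) frequency_leD;
  exact: frequency_bounded.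
Qed.

End Comparison.

Lemma limn_sup_frequency_le1 a :
  (forall n, a n <= n)%N -> limn_sup (frequency a) <= 1.
Proof.
move=> an; rewrite -[leRHS](cvg_limn_inf_sup (cvg_cst (1 : R^o))).2.
apply: le_limn_sup; [exact: frequency_bounded|exact: bounded_cst|].
by move=> n; exact: frequency_le1.
Qed.

Lemma limn_inf_frequency_ge0 a :
  (forall n, a n <= n)%N -> 0 <= limn_inf (frequency a).
Proof.
move=> an; rewrite -[leLHS](cvg_limn_inf_sup (cvg_cst (0 : R^o))).1.
apply: le_limn_inf; [exact: bounded_cst|exact: frequency_bounded|].
exact: frequency_ge0.
Qed.

End Frequency.

Lemma card_ord_lt n N : (#|[set i : 'I_n | (i < N)%N]| <= N)%N.
Proof.
rewrite cardE -(size_map val) -[leqRHS](size_iota 0); apply: uniq_leq_size.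
  by rewrite (map_inj_uniq val_inj) enum_uniq.
move=> j /mapP[i]; rewrite mem_enum => /set_mem iN ->; by rewrite mem_iota.
Qed.

Lemma card_ord_leD n N (P Q : pred 'I_n) :
  (forall i : 'I_n, N <= i -> P i -> Q i)%N ->
  (#|[set i : 'I_n | P i]| <= #|[set i : 'I_n | Q i]| + N)%N.
Proof.
move=> PQ; apply: leq_trans (leq_add (leqnn _) (card_ord_lt n N)).
rewrite -cardUI (leq_trans _ (leq_addr _ _)) //.
apply/subset_leq_card/fintype.subsetP => i.
move=> /set_mem Pi; rewrite inE; apply/orP; have [iN|Ni] := ltnP i N.
  by right; apply/mem_set.
by left; apply/mem_set/PQ.
Qed.

Section CylinderCompactness.
Variables (X : finType) (G : countType).
Implicit Types a b c : G -> X.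

Definition agree k a b := forall g, (pickle g < k)%N -> a g = b g.

Lemma agree_sym k a b : agree k a b -> agree k b a.
Proof. by move=> ab g gk; rewrite ab. Qed.

Lemma agree_trans k a b c : agree k a b -> agree k b c -> agree k a c.
Proof. by move=> ab bc g gk; rewrite ab // bc. Qed.

Lemma agree_le k m a b : (k <= m)%N -> agree m a b -> agree k a b.
Proof. by move=> km ab g gk; apply: ab; apply: leq_trans gk km. Qed.

Lemma agree_succ k a b :
  agree k.+1 a b <-> agree k a b /\ forall g, pickle g = k -> a g = b g.
Proof.
split=> [ab|[ab abk] g]; first by split=> g gk; apply: ab; rewrite ?gk // ltnW.
by rewrite ltnS leq_eqVlt => /orP[/eqP|]; [exact: abk|exact: ab].
Qed.

Variable P : (G -> X) -> nat -> Prop.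
Hypothesis P_agree : forall k a b, agree k a b -> P a k -> P b k.
Hypothesis P_le : forall k m a, (k <= m)%N -> P a k -> P a m.

Definition unbounded a k := forall m, exists2 b, agree k a b & ~ P b m.

(* Pigeonhole on the finitely many values of the coordinate numbered k. *)
Lemma unbounded_succ a k :
  unbounded a k -> exists2 a', agree k a a' & unbounded a' k.+1.
Proof.
move=> ua.
have [[g0 g0k]|nok] := pselect (exists g0 : G, pickle g0 = k); last first.
  exists a => // m; have [b ab nPb] := ua m; exists b => //.
  by apply/agree_succ; split=> // g gk; case: nok; exists g.
have eq_g0 g : pickle g = k -> g = g0 by rewrite -g0k => /(pcan_inj pickleK).
pose upd (x : X) g := if g == g0 then x else a g.
have agree_upd x : agree k a (upd x).
  by move=> g gk; rewrite /upd; case: eqP => // eg; move: gk; rewrite eg g0k ltnn.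
have [[x ux]|/forallNP nub] := pselect (exists x, unbounded (upd x) k.+1).
  by exists (upd x).
have /choice[m_ Pm] : forall x, exists m, forall b, agree k.+1 (upd x) b -> P b m.
  move=> x; apply: contrapT => nm; apply: (nub x) => m.
  apply: contrapT => nb; apply: nm; exists m => b ab.
  by apply: contrapT => nPb; apply: nb; exists b.
have [b ab []] := ua (\max_x m_ x).
apply: (P_le (leq_bigmax (b g0))); apply: Pm; apply/agree_succ; split.
  exact: agree_trans (agree_sym (agree_upd _)) ab.
by move=> g /eq_g0 ->; rewrite /upd eqxx.
Qed.

Hypothesis P_ex : forall a, exists k, P a k.

(* König's argument: refining an unbounded cylinder one coordinate at a time
   converges to a point q lying in all of them, which contradicts [P_ex q]. *)
Lemma uniform_level : exists k, forall a, P a k.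
Proof.
apply: contrapT => /forallNP nunif.
have bad k : exists a, ~ P a k by apply/existsNP/nunif.
have [a0 _] := bad 0%N.
have /choice[next Hnext] : forall ak : (G -> X) * nat, exists a',
    unbounded ak.1 ak.2 -> agree ak.2 ak.1 a' /\ unbounded a' ak.2.+1.
  case=> a k /=; have [/unbounded_succ[a' ? ?]|nu] := pselect (unbounded a k).
    by exists a'.
  by exists a => /nu.
pose p := fix p k := if k is k'.+1 then next (p k', k') else a0.
have up k : unbounded (p k) k.
  elim: k => [m|k IH]; last exact: (Hnext (p k, k) IH).2.
  by have [b nPb] := bad m; exists b.
have agree_p k m : (k <= m)%N -> agree k (p k) (p m).
  elim: m => [|m IH]; first by rewrite leqn0 => /eqP ->.
  rewrite leq_eqVlt ltnS => /orP[/eqP -> //|km].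
  exact: agree_trans (IH km) (agree_le km (Hnext (p m, m) (up m)).1).
pose q g := p (pickle g).+1 g.
have agree_q k : agree k (p k) q.
  by move=> g gk; apply/esym/(agree_p _ _ gk).
have [k0 Pq] := P_ex q; have [b pb nPb] := up k0 k0.
by apply: nPb; apply: P_agree Pq; exact: agree_trans (agree_sym (agree_q k0)) pb.
Qed.

End CylinderCompactness.

Lemma compatible_metric_uniform (R : realType) (X : finType) (G : countType)
    (d : (G -> X) -> (G -> X) -> R) :
  compatible_metric d ->
  forall e : R, 0 < e -> exists k, forall a b, agree k a b -> d a b < e.
Proof.
move=> [[_ _ dsym dtri] d_nbhs] e e0; have e20 : 0 < e / 2 by rewrite divr_gt0.
pose P a k := exists c, forall b, agree k a b -> d c b < e / 2.
have [|||k Pk] := @uniform_level X G P.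
- move=> k a a' aa' [c Pc]; exists c => b a'b; exact/Pc/(agree_trans aa').
- move=> k m a km [c Pc]; exists c => b ab; exact/Pc/(agree_le km).
- move=> a; have [s sd] := (d_nbhs a).1 _ e20.
  exists (\max_(g <- s) (pickle g).+1)%N, a => b ab; apply: sd => g gs.
  by apply/esym/ab; apply: leq_bigmax_seq.
exists k => a b ab; have [c Pc] := Pk a.
apply: le_lt_trans (dtri a c b) _; rewrite dsym [e]splitr.
by apply: ltrD; apply: Pc.
Qed.

Lemma iter_shift (X G : Type) (phi : G -> G) n (x : G -> X) :
  iter n (Defs.shift phi) x = x \o iter n phi.
Proof.
elim: n => [|n IH] //=; rewrite IH; apply: funext => a.
by rewrite /Defs.shift /= -iterSr.
Qed.

Lemma periodic_orbit_finite (T : Type) (f : T -> T) a p : (0 < p)%N ->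
  iter p f a = a -> finite_set [set iter n f a | n in [set: nat]].
Proof.
move=> p0 fpa; apply: (@sub_finite_set _ _ ((fun j => iter j f a) @` `I_p)).
  move=> _ [j _ <-]; exists (j %% p)%N; first by rewrite /= ltn_mod.
  rewrite {2}(divn_eq j p) addnC iterD; congr iter.
  by elim: (j %/ p)%N => [|q IH] //; rewrite mulSn iterD -IH fpa.
exact/finite_image/finite_II.
Qed.

Lemma non_quasi_periodic_avoid (G : Type) (phi : G -> G) a g :
  non_quasi_periodic phi a -> \forall n \near \oo, iter n phi g <> a.
Proof.
move=> nqp; have [[n0 n0a]|never] := pselect (exists n0, iter n0 phi g = a).
  near=> n => na; apply/nqp/(@periodic_orbit_finite _ _ _ (n - n0)).
    by rewrite subn_gt0; near: n; exists n0.+1.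
  by rewrite -{1}n0a -iterD subnK //; near: n; exists n0.
by apply: nearW => n na; apply: never; exists n.
Unshelve. all: by end_near. Qed.

Definition asymptotic (T : Type) (R : numDomainType) (f : T -> T)
    (d : T -> T -> R) (a b : T) :=
  forall e, 0 < e -> \forall n \near \oo, d (iter n f a) (iter n f b) < e.

Lemma asymptotic_sym (T : Type) (R : numDomainType) (f : T -> T)
    (d : T -> T -> R) a b :
  (forall x y, d x y = d y x) -> asymptotic f d a b -> asymptotic f d b a.
Proof.
by move=> dsym ab e e0; apply: filterS (ab e e0) => n; rewrite dsym.
Qed.

Section FiniteChange.
Variables (X : finType) (G : countType) (phi : G -> G) (x w : G -> X).
Hypothesis finite_change : finite_set [set a | x a <> w a].
Hypothesis change_non_quasi_periodic :
  forall a, x a <> w a -> non_quasi_periodic phi a.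

Lemma eventually_agree_on_orbit g :
  \forall n \near \oo, x (iter n phi g) = w (iter n phi g).
Proof.
have [F eF] := finite_fsetP.1 finite_change.
pose avoid a := [set n | iter n phi g <> a].
apply: filterS (@filter_bigI _ _ F avoid _ _ _) => [n Fn|a aF].
  apply: contrapT => xw; have : [set a | x a <> w a] (iter n phi g) by [].
  by rewrite eF => /Fn.
apply/non_quasi_periodic_avoid/change_non_quasi_periodic.
by have : [set a | x a <> w a] a by rewrite eF.
Qed.

Lemma eventually_agree_iter_shift k : \forall n \near \oo,
  agree k (iter n (Defs.shift phi) x) (iter n (Defs.shift phi) w).
Proof.
elim: k => [|k IH]; first by apply: nearW => n g; rewrite ltn0.
have coord_k : \forall n \near \oo,
    forall g, pickle g = k -> x (iter n phi g) = w (iter n phi g).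
  have [[g0 g0k]|nok] := pselect (exists g0 : G, pickle g0 = k); last first.
    by apply: nearW => n g gk; case: nok; exists g.
  apply: filterS (eventually_agree_on_orbit g0) => n xw g.
  by rewrite -g0k => /(pcan_inj pickleK) ->.
apply: filterS2 IH coord_k => n agree_k xw_k; apply/agree_succ; split => //.
by move=> g /xw_k; rewrite !iter_shift.
Qed.

Lemma finite_change_asymptotic (R : realType) (d : (G -> X) -> (G -> X) -> R) :
  compatible_metric d -> asymptotic (Defs.shift phi) d x w.
Proof.
move=> dcompat e e0; have [k agree_dist] := compatible_metric_uniform dcompat e0.
by apply: filterS (eventually_agree_iter_shift k) => n; exact: agree_dist.
Qed.

End FiniteChange.

Lemma eq0_of_le_eq0 {R : numDomainType} (r s : R) : 0 <= r <= s -> s = 0 -> r = 0.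
Proof. by move=> /andP[r0 rs] s0; apply/eqP; rewrite eq_le r0 -s0 rs. Qed.

Lemma lt1_of_le_lt1 {R : numDomainType} (r s : R) : 0 <= r <= s -> s < 1 -> r < 1.
Proof. by move=> /andP[_]; exact: le_lt_trans. Qed.

Section DistributionalTransfer.
Variables (R : realType) (X G : Type) (phi : G -> G).
Variable d : (G -> X) -> (G -> X) -> R.
Hypothesis d_metric : is_metric d.
Implicit Types a b : G -> X.

Local Notation asym := (asymptotic (Defs.shift phi) d).

Lemma xi_le a b t n : (xi phi d a b t n <= n)%N.
Proof. by rewrite /xi; apply: leq_trans (max_card _) _; rewrite card_ord. Qed.

Lemma xi_asymptotic_leD a a' b b' t : asym a a' -> asym b b' -> 0 < t ->
  exists N, forall n, (xi phi d a b (t / 2) n <= xi phi d a' b' t n + N)%N.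
Proof.
have [_ _ dsym dtri] := d_metric.
move=> aa' bb' t0; have t4 : 0 < t / 4 by rewrite divr_gt0.
have [N _ closeN] := filterI (aa' _ t4) (bb' _ t4).
exists N => n; apply: card_ord_leD => i Ni /=.
set A := iter i _ a; set A' := iter i _ a'.
set B := iter i _ b; set B' := iter i _ b'.
have [AA' BB'] : d A A' < t / 4 /\ d B B' < t / 4 by exact: closeN.
move=> AB; have tri : d A' B' <= d A A' + d A B + d B B'.
  by apply: le_trans (dtri A' A B') _; rewrite (dsym A') -addrA lerD2l dtri.
apply: le_lt_trans tri _; rewrite [t in _ < t](_ : t = t / 4 + t / 2 + t / 4);
  last by field.
by rewrite !ltrD.
Qed.

Lemma Fup_le1 a b t : Fup phi d a b t <= 1.
Proof. exact/limn_sup_frequency_le1/xi_le. Qed.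

Lemma Flow_ge0 a b t : 0 <= Flow phi d a b t.
Proof. exact/limn_inf_frequency_ge0/xi_le. Qed.

Lemma Fup_asymptotic_le a a' b b' t : asym a a' -> asym b b' -> 0 < t ->
  Fup phi d a b (t / 2) <= Fup phi d a' b' t.
Proof.
move=> aa' bb' t0; have [N leN] := xi_asymptotic_leD aa' bb' t0.
exact: le_limn_sup_frequency (xi_le _ _ _) (xi_le _ _ _) leN.
Qed.

Lemma Flow_asymptotic_le a a' b b' t : asym a a' -> asym b b' -> 0 < t ->
  Flow phi d a b (t / 2) <= Flow phi d a' b' t.
Proof.
move=> aa' bb' t0; have [N leN] := xi_asymptotic_leD aa' bb' t0.
exact: le_limn_inf_frequency (xi_le _ _ _) (xi_le _ _ _) leN.
Qed.

Let asym_sym a b : asym a b -> asym b a.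
Proof. by have [_ _ dsym _] := d_metric; exact: asymptotic_sym. Qed.

Lemma Fup_eq1_asymptotic a a' b b' : asym a a' -> asym b b' ->
  (forall t, 0 < t -> Fup phi d a b t = 1) <->
  (forall t, 0 < t -> Fup phi d a' b' t = 1).
Proof.
suff Fup1 a1 a2 b1 b2 : asym a1 a2 -> asym b1 b2 ->
    (forall t, 0 < t -> Fup phi d a1 b1 t = 1) ->
    (forall t, 0 < t -> Fup phi d a2 b2 t = 1).
  by move=> aa' bb'; split; apply: Fup1 => //; apply: asym_sym.
move=> aa bb F1 t t0; apply/eqP; rewrite eq_le Fup_le1 /=.
by rewrite -(F1 (t / 2)) ?divr_gt0 // Fup_asymptotic_le.
Qed.

Section LowerTransfer.
Variable Q : R -> Prop.
Hypothesis Q_down : forall r s, 0 <= r <= s -> Q s -> Q r.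

Lemma Flow_half_asymptotic a a' b b' t : asym a a' -> asym b b' -> 0 < t ->
  Q (Flow phi d a b t) -> Q (Flow phi d a' b' (t / 2)).
Proof.
move=> aa' bb' t0; apply: Q_down; rewrite Flow_ge0 /=.
by apply: Flow_asymptotic_le => //; apply: asym_sym.
Qed.

Lemma exists_Flow_asymptotic a a' b b' : asym a a' -> asym b b' ->
  (exists2 t, 0 < t & Q (Flow phi d a b t)) <->
  (exists2 t, 0 < t & Q (Flow phi d a' b' t)).
Proof.
move=> aa' bb'; split=> -[t t0 Qt]; exists (t / 2); rewrite ?divr_gt0 //.
  exact: Flow_half_asymptotic aa' bb' t0 Qt.
exact: Flow_half_asymptotic (asym_sym aa') (asym_sym bb') t0 Qt.
Qed.

Lemma exists_uniform_Flow_asymptotic (D : set (G -> X)) (y : (G -> X) -> G -> X) :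
  (forall x, asym x (y x)) ->
  (exists2 t, 0 < t & forall x z, D x -> D z -> x <> z -> Q (Flow phi d x z t)) <->
  (exists2 t, 0 < t &
     forall x z, D x -> D z -> x <> z -> Q (Flow phi d (y x) (y z) t)).
Proof.
move=> xy; split=> -[t t0 Qt]; exists (t / 2); rewrite ?divr_gt0 // => x z Dx Dz xz.
  exact: Flow_half_asymptotic (xy x) (xy z) t0 (Qt _ _ Dx Dz xz).
have [yxx yzz] := (asym_sym (xy x), asym_sym (xy z)).
exact: Flow_half_asymptotic yxx yzz t0 (Qt _ _ Dx Dz xz).
Qed.

End LowerTransfer.

Lemma DC1_pair_asymptotic a a' b b' : asym a a' -> asym b b' ->
  DC1_pair phi d a b <-> DC1_pair phi d a' b'.
Proof.
move=> aa' bb'; have := Fup_eq1_asymptotic aa' bb'.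
have := exists_Flow_asymptotic eq0_of_le_eq0 aa' bb'.
by rewrite /DC1_pair => -[lo lo'] [up up']; split=> -[]; split; auto.
Qed.

Lemma DC2_pair_asymptotic a a' b b' : asym a a' -> asym b b' ->
  DC2_pair phi d a b <-> DC2_pair phi d a' b'.
Proof.
move=> aa' bb'; have := Fup_eq1_asymptotic aa' bb'.
have := exists_Flow_asymptotic lt1_of_le_lt1 aa' bb'.
by rewrite /DC2_pair => -[lo lo'] [up up']; split=> -[]; split; auto.
Qed.

End DistributionalTransfer.

Lemma scrambled_set_transfer (T : Type) (P : T -> T -> Prop) (D : set T)
    (y : T -> T) :
  (forall x z, P x z <-> P (y x) (y z)) ->
  scrambled_set P D <->
  ((exists x z, [/\ D x, D z & x <> z]) /\
   forall x z, D x -> D z -> x <> z -> P (y x) (y z)).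
Proof.
move=> Py; split=> -[two HP]; split=> // x z Dx Dz xz.
  by apply/(Py x z).1/HP.
by apply/(Py x z).2/HP.
Qed.

Theorem corollary4p3 (R : realType) (X : finType) (Gamma : countType)
  (phi : Gamma -> Gamma) (d : (Gamma -> X) -> (Gamma -> X) -> R)
  (y : (Gamma -> X) -> (Gamma -> X)) :
  (1 < #|X|)%N ->
  inhabited Gamma ->
  compatible_metric d ->
  (forall x : Gamma -> X,
      finite_set [set a | x a <> y x a] /\
      (forall a, x a <> y x a -> non_quasi_periodic phi a)) ->
  forall (D : set (Gamma -> X)) (u v : Gamma -> X),
  [/\ (forall t : R, 0 < t -> Fup phi d u v t = 1) <->
        (forall t : R, 0 < t -> Fup phi d (y u) (y v) t = 1),
      (exists2 t : R, 0 < t &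
         forall x z, D x -> D z -> x <> z -> Flow phi d x z t = 0) <->
      (exists2 t : R, 0 < t &
         forall x z, D x -> D z -> x <> z -> Flow phi d (y x) (y z) t = 0),
      (exists2 t : R, 0 < t &
         forall x z, D x -> D z -> x <> z -> Flow phi d x z t < 1) <->
      (exists2 t : R, 0 < t &
         forall x z, D x -> D z -> x <> z -> Flow phi d (y x) (y z) t < 1),
      scrambled_set (DC1_pair phi d) D <->
        ((exists x z, [/\ D x, D z & x <> z]) /\
         forall x z, D x -> D z -> x <> z -> DC1_pair phi d (y x) (y z)) &
      scrambled_set (DC2_pair phi d) D <->
        ((exists x z, [/\ D x, D z & x <> z]) /\
         forall x z, D x -> D z -> x <> z -> DC2_pair phi d (y x) (y z))].
Proof.
(* The hypotheses #|X| > 1 and [inhabited Gamma] only exclude degenerate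
   spaces; the argument does not need them. *)
move=> _ _ dcompat y_change D u v.
have d_metric := dcompat.1.
have asym x : asymptotic (Defs.shift phi) d x (y x).
  by have [fin nqp] := y_change x; exact: finite_change_asymptotic.
split.
- exact: Fup_eq1_asymptotic.
- exact: (exists_uniform_Flow_asymptotic d_metric eq0_of_le_eq0 D asym).
- exact: (exists_uniform_Flow_asymptotic d_metric lt1_of_le_lt1 D asym).
- apply: scrambled_set_transfer => x z; exact: DC1_pair_asymptotic.
- apply: scrambled_set_transfer => x z; exact: DC2_pair_asymptotic.
Qed.
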